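(* The triple $(X,\tau,\mathcal{P})$ is a $\mathcal{P}P$-space if and only if every essential ideal of $C(X)_\mathcal{P}$ is a $z$-ideal.
   Context: Let $(X,\tau)$ be a $T_1$ topological space and $\mathcal{P}$ an ideal of closed subsets of $X$ (a nonempty family of closed sets closed under finite unions and under taking closed subsets). For $f\colon X\to\mathbb{R}$, $D_f$ denotes the set of points of discontinuity of $f$, and $C(X)_\mathcal{P}=\{f\colon X\to\mathbb{R} : \overline{D_f}\in\mathcal{P}\}$, a commutative ring with unity under pointwise operations. $(X,\tau,\mathcal{P})$ is a $\mathcal{P}P$-space if $C(X)_\mathcal{P}$ is von Neumann regular. An ideal is essential if it intersects every nonzero ideal nontrivially. In a commutative ring, $M(a)$ is the intersection of all maximal ideals containing $a$; an ideal $I$ is a $z$-ideal if $a\in I\Rightarrow M(a)\subseteq I$. *)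

From HB Require Import structures.
From mathcomp Require Import all_boot all_order all_algebra.
From mathcomp Require Import all_classical all_reals all_analysis.
Set Implicit Arguments. Unset Strict Implicit. Unset Printing Implicit Defensive.
Import Order.TTheory GRing.Theory Num.Theory.
Import numFieldNormedType.Exports.
Local Open Scope classical_set_scope.
Local Open Scope ring_scope.

Section CXP.
Variables (R : realType) (X : topologicalType).

Definition closed_ideal (P : set (set X)) : Prop :=
  [/\ P !=set0,
      (forall A, P A -> closed A),
      (forall A B, P A -> P B -> P (A `|` B)) &
      (forall A B, P B -> closed A -> A `<=` B -> P A)].

Definition discont (f : X -> R) : set X := [set x : X | ~ {for x, continuous f}].

Definition CXP (P : set (set X)) : set (X -> R) :=
  [set f | P (closure (discont f))].

Section RingNotions.
Variable P : set (set X).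
Local Notation C := (CXP P).

Definition is_ideal (I : set (X -> R)) : Prop :=
  [/\ I `<=` C, I (fun _ => 0),
      (forall f g, I f -> I g -> I (fun x => f x + g x)),
      (forall f, I f -> I (fun x => - f x)) &
      (forall f g, C f -> I g -> I (fun x => f x * g x))].

Definition nonzero_ideal (J : set (X -> R)) : Prop :=
  is_ideal J /\ exists f, J f /\ f <> (fun _ => 0).

Definition essential_ideal (I : set (X -> R)) : Prop :=
  is_ideal I /\ forall J, nonzero_ideal J ->
    exists f, I f /\ J f /\ f <> (fun _ => 0).

Definition maximal_ideal (M : set (X -> R)) : Prop :=
  [/\ is_ideal M, M <> C &
      forall J, is_ideal J -> M `<=` J -> J = M \/ J = C].

Definition Mof (a : X -> R) : set (X -> R) :=
  [set f | C f /\ forall M, maximal_ideal M -> M a -> M f].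

Definition z_ideal (I : set (X -> R)) : Prop :=
  is_ideal I /\ forall a, I a -> Mof a `<=` I.

Definition vN_regular : Prop :=
  forall a, C a -> exists b, C b /\ a = (fun x => a x * a x * b x).

End RingNotions.
End CXP.

Definition PP_space (R : realType) (X : topologicalType) (P : set (set X)) :=
  @vN_regular R X P.

From mathcomp Require Import all_boot all_order all_algebra.
From mathcomp Require Import all_classical all_reals all_analysis.
From mathcomp Require Import ring.
Set Implicit Arguments. Unset Strict Implicit. Unset Printing Implicit Defensive.
Import Order.TTheory GRing.Theory Num.Theory.
Import numFieldNormedType.Exports.
Local Open Scope classical_set_scope.
Local Open Scope ring_scope.

(* If C(X)_P is von Neumann regular, say a = a^2 b, then a b is 1 off the
   zero set of a; a function f lying in every maximal ideal containing a
   vanishes on that zero set (evaluation kernels are maximal), so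
   f = (f b) a lies in every ideal containing a: all ideals are z-ideals.
   Conversely, for a in C(X)_P the ideal (a^2) + Ann(a) is essential, since a
   nonzero f either annihilates a or gives the nonzero common element a^2 f.
   Maximal ideals are prime, so a lies in M(a^2); if this ideal is a z-ideal
   then a = c a^2 + g with g a = 0, and multiplying by a shows a = a^2 c. *)

Section CXPRing.
Variables (R : realType) (X : topologicalType) (P : set (set X)).
Hypothesis HP : closed_ideal P.
Local Notation C := (@CXP R X P).

Lemma CXP_discont_sub (h f g : X -> R) :
  discont h `<=` discont f `|` discont g -> C f -> C g -> C h.
Proof.
move=> sub Cf Cg; case: HP => _ _ PU PS.
apply: (PS _ (closure (discont f) `|` closure (discont g))).
- exact: PU.
- exact: closed_closure.
- by rewrite -closureU; apply: closureS.
Qed.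

Lemma CXP_cst (c : R) : C (fun _ => c).
Proof.
case: HP => [[A PA] _ _ PS]; rewrite /CXP /=.
have -> : discont (fun _ : X => c) = set0.
  by apply/seteqP; split=> x //= Hx; apply: Hx; apply: cvg_cst.
by rewrite closure0; apply: (PS _ A PA) => //; apply: closed0.
Qed.

Lemma CXPD (f g : X -> R) : C f -> C g -> C (fun x => f x + g x).
Proof.
apply: CXP_discont_sub => x /= Hx; apply: contrapT => /not_orP[].
by move=> /contrapT Hf /contrapT Hg; apply: Hx; apply: cvgD.
Qed.

Lemma CXPM (f g : X -> R) : C f -> C g -> C (fun x => f x * g x).
Proof.
apply: CXP_discont_sub => x /= Hx; apply: contrapT => /not_orP[].
by move=> /contrapT Hf /contrapT Hg; apply: Hx; apply: cvgM.
Qed.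

Lemma CXPN (f : X -> R) : C f -> C (fun x => - f x).
Proof.
move=> Cf; apply: (@CXP_discont_sub _ f f) => // x /= Hx; left => Hf.
by apply: Hx; apply: cvgN.
Qed.

Section Ideals.
Variable I : set (X -> R).
Hypothesis HI : is_ideal P I.

Lemma ideal_CXP (f : X -> R) : I f -> C f.
Proof. by case: HI => + _ _ _ _; apply. Qed.

Lemma idealD (f g : X -> R) : I f -> I g -> I (fun x => f x + g x).
Proof. by case: HI => _ _ + _ _; apply. Qed.

Lemma idealMl (c f : X -> R) : C c -> I f -> I (fun x => c x * f x).
Proof. by case: HI => _ _ _ _; apply. Qed.

Lemma ideal_eq_CXP : I (fun _ => 1) -> I = C.
Proof.
move=> I1; apply/seteqP; split=> [f|f Cf]; first exact: ideal_CXP.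
by have := idealMl Cf I1; congr I; apply: funext => x; rewrite mulr1.
Qed.

End Ideals.

Definition ideal_add_mul (N : set (X -> R)) (u : X -> R) : set (X -> R) :=
  [set h | exists m c, [/\ N m, C c & h = (fun x => m x + c x * u x)]].

Definition annihilator (a : X -> R) : set (X -> R) :=
  [set g | C g /\ forall x, g x * a x = 0].

Lemma is_ideal_add_mul (N : set (X -> R)) (u : X -> R) :
  is_ideal P N -> C u -> is_ideal P (ideal_add_mul N u).
Proof.
move=> [NC N0 ND NN NM] Cu; split.
- move=> _ [m [c [Nm Cc ->]]]; apply: CXPD; [exact: NC | exact: CXPM].
- exists (fun _ => 0), (fun _ => 0); split => //; first exact: CXP_cst.
  by apply: funext => x; ring.
- move=> _ _ [m1 [c1 [Nm1 Cc1 ->]]] [m2 [c2 [Nm2 Cc2 ->]]].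
  exists (fun x => m1 x + m2 x), (fun x => c1 x + c2 x).
  by split; [exact: ND | exact: CXPD | apply: funext => x; ring].
- move=> _ [m [c [Nm Cc ->]]].
  exists (fun x => - m x), (fun x => - c x).
  by split; [exact: NN | exact: CXPN | apply: funext => x; ring].
- move=> k _ Ck [m [c [Nm Cc ->]]].
  exists (fun x => k x * m x), (fun x => k x * c x).
  by split; [exact: NM | exact: CXPM | apply: funext => x; ring].
Qed.

Lemma is_ideal_annihilator (a : X -> R) : is_ideal P (annihilator a).
Proof.
split.
- by move=> g [].
- by split; [exact: CXP_cst | move=> x; rewrite mul0r].
- move=> f g [Cf Af] [Cg Ag]; split; first exact: CXPD.
  by move=> x; rewrite mulrDl Af Ag addr0.
- move=> f [Cf Af]; split; first exact: CXPN.
  by move=> x; rewrite mulNr Af oppr0.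
- move=> k g Ck [Cg Ag]; split; first exact: CXPM.
  by move=> x; rewrite -mulrA Ag mulr0.
Qed.

Lemma eval_kernel_maximal (x0 : X) :
  maximal_ideal P [set f | C f /\ f x0 = 0].
Proof.
split.
- split.
  + by move=> f [].
  + by split; first exact: CXP_cst.
  + by move=> f g [Cf f0] [Cg g0]; split; [exact: CXPD | rewrite /= f0 g0 addr0].
  + by move=> f [Cf f0]; split; [exact: CXPN | rewrite /= f0 oppr0].
  + by move=> k g Ck [Cg g0]; split; [exact: CXPM | rewrite /= g0 mulr0].
- move=> E; have : C (fun _ => 1) by exact: CXP_cst.
  by rewrite -E => -[_ /eqP]; rewrite oner_eq0.
- move=> J HJ sub.
  have [[f [Jf fx0]] | Jx0] := pselect (exists f, J f /\ f x0 != 0); last first.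
    left; apply/seteqP; split=> // f Jf; split; first exact: ideal_CXP Jf.
    by apply: contrapT => fx0; apply: Jx0; exists f; split => //; apply/eqP.
  right; apply: ideal_eq_CXP => //.
  have Cf := ideal_CXP HJ Jf.
  have J1cf : J (fun x => 1 - (f x0)^-1 * f x).
    apply: sub; split; last by rewrite /= mulVf // subrr.
    by apply: CXPD; [exact: CXP_cst | apply/CXPN/CXPM => //; exact: CXP_cst].
  have := idealD HJ J1cf (idealMl HJ (CXP_cst (f x0)^-1) Jf).
  by congr J; apply: funext => x; ring.
Qed.

Lemma maximal_ideal_sqr (M : set (X -> R)) (a : X -> R) :
  maximal_ideal P M -> C a -> M (fun x => a x * a x) -> M a.
Proof.
move=> [HM MC Mmax] Ca Ma2; apply: contrapT => Mna.
have MJ : M `<=` ideal_add_mul M a.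
  move=> m Mm; exists m, (fun _ => 0); split => //; first exact: CXP_cst.
  by apply: funext => x; ring.
have [EJ | EJ] := Mmax _ (is_ideal_add_mul HM Ca) MJ.
  apply: Mna; rewrite -EJ; exists (fun _ => 0), (fun _ => 1).
  by case: HM => _ M0 _ _ _; split => //; [exact: CXP_cst | apply: funext => x; ring].
have : ideal_add_mul M a (fun _ => 1) by rewrite EJ; apply: CXP_cst.
move=> [m [c [Mm Cc E1]]]; apply: Mna.
(* a = a (m + c a) = a m + c a^2 *)
have := idealD HM (idealMl HM Ca Mm) (idealMl HM Cc Ma2).
congr M; apply: funext => x.
by rewrite -[RHS]mulr1 (congr1 (fun h => h x) E1); ring.
Qed.

Lemma ideal_add_mul_essential (a : X -> R) :
  C a -> essential_ideal P (ideal_add_mul (annihilator a) (fun x => a x * a x)).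
Proof.
move=> Ca; split.
  by apply: is_ideal_add_mul; [exact: is_ideal_annihilator | exact: CXPM].
move=> J [HJ [f [Jf fn0]]]; have Cf := ideal_CXP HJ Jf.
have [fa0 | /existsNP[x0 /eqP fax0]] := pselect (forall x, f x * a x = 0).
  exists f; split => //; exists f, (fun _ => 0); split => //; first exact: CXP_cst.
  by apply: funext => x; ring.
exists (fun x => (a x * a x) * f x); split; [|split].
- exists (fun _ => 0), f; split => //; last by apply: funext => x; ring.
  by case: (is_ideal_annihilator a).
- by apply: (idealMl (c := fun x => a x * a x) HJ) => //; apply: CXPM.
- move=> /(congr1 (fun h => h x0)) /eqP; apply/negP.
  by move: fax0; rewrite mulf_eq0 negb_or => /andP[f0 a0]; rewrite !mulf_neq0.
Qed.

Lemma Mof_vanishes (a f : X -> R) (x : X) :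
  C a -> Mof P a f -> a x = 0 -> f x = 0.
Proof. by move=> Ca [_ Hf] ax0; have [] := Hf _ (eval_kernel_maximal x) (conj Ca ax0). Qed.

Lemma sqr_Mof (a : X -> R) : C a -> Mof P (fun x => a x * a x) a.
Proof. by move=> Ca; split=> // M MM; apply: maximal_ideal_sqr. Qed.

Lemma vN_regular_z_ideal (I : set (X -> R)) :
  vN_regular R P -> is_ideal P I -> z_ideal P I.
Proof.
move=> vN HI; split => // a Ia f Maf.
have Ca := ideal_CXP HI Ia; have [b [Cb Eab]] := vN a Ca.
have := idealMl HI (CXPM Maf.1 Cb) Ia.
congr I; apply: funext => x.
have [ax0 | ax0] := eqVneq (a x) 0; first by rewrite (Mof_vanishes Ca Maf) // ax0 mulr0.
have abx : a x * b x = 1.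
  by apply: (mulfI ax0); rewrite mulr1 [RHS](congr1 (fun h => h x) Eab) mulrA.
by rewrite -mulrA [b x * a x]mulrC abx mulr1.
Qed.

Lemma z_ideal_add_mul_vN (a : X -> R) :
  z_ideal P (ideal_add_mul (annihilator a) (fun x => a x * a x)) ->
  C a -> exists b, C b /\ a = (fun x => a x * a x * b x).
Proof.
move=> [HI Z] Ca.
have Ia2 : ideal_add_mul (annihilator a) (fun x => a x * a x) (fun x => a x * a x).
  exists (fun _ => 0), (fun _ => 1); split.
  - by case: (is_ideal_annihilator a).
  - exact: CXP_cst.
  - by apply: funext => x; ring.
have [g [c [[_ ga0] Cc Ea]]] := Z _ Ia2 _ (sqr_Mof Ca).
exists c; split => //; apply: funext => x.
have [ax0 | ax0] := eqVneq (a x) 0; first by rewrite ax0 !mul0r.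
have gx0 : g x = 0 by apply: (mulIf ax0); rewrite ga0 mul0r.
by rewrite [in LHS](congr1 (fun h => h x) Ea) gx0 add0r mulrC.
Qed.

End CXPRing.

Theorem corollary2p19 (R : realType) (X : topologicalType) (P : set (set X)) :
  accessible_space X -> closed_ideal P ->
  (PP_space R P <-> forall I, @essential_ideal R X P I -> @z_ideal R X P I).
Proof.
move=> _ HP; split=> [vN I [HI _] | Hz a Ca].
  exact: vN_regular_z_ideal.
apply: (z_ideal_add_mul_vN HP _ Ca).
by apply: Hz; apply: ideal_add_mul_essential.
Qed.
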